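(* Let $G$ be the Heawood graph. Then $M(G)=Z(G)=6$.
   Context: The Heawood graph is the bipartite incidence graph of the Fano plane: its $14$ vertices are the $7$ points $1,\dots,7$ and the $7$ lines $\{1,2,4\},\{2,3,5\},\{3,4,6\},\{4,5,7\},\{5,6,1\},\{6,7,2\},\{7,1,3\}$, and a point is adjacent to a line if and only if it lies on it; it is $3$-regular. For a graph $G$ on vertices $w_1,\dots,w_N$, $S(G)$ is the set of real symmetric $N\times N$ matrices $A$ with $a_{st}\neq 0$ for $s\ne t$ if and only if $w_s,w_t$ are adjacent (diagonal arbitrary); $M(G)$ is the maximum nullity of a matrix in $S(G)$. Zero forcing: color each vertex black or white; if a black vertex has exactly one white neighbor, that neighbor is recolored black. A set $Z$ is a zero forcing set if starting with exactly $Z$ black and applying this rule repeatedly makes all vertices black; $Z(G)$ is the minimum size of a zero forcing set. *)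

From HB Require Import structures.
From mathcomp Require Import all_boot all_order all_algebra.
From mathcomp Require Import reals.
Set Implicit Arguments. Unset Strict Implicit. Unset Printing Implicit Defensive.
Import Order.TTheory GRing.Theory Num.Theory.

(* ---------- The Heawood graph on vertex set 'I_14 ----------
   Vertices 0..6 are the Fano points 1..7 (vertex i is point i+1),
   vertices 7..13 are the seven lines, in the order listed below. *)
Definition fano_lines : seq (seq nat) :=
  [:: [:: 1; 2; 4]; [:: 2; 3; 5]; [:: 3; 4; 6]; [:: 4; 5; 7];
      [:: 5; 6; 1]; [:: 6; 7; 2]; [:: 7; 1; 3]].

Definition fano_incid (p l : nat) : bool := p.+1 \in nth [::] fano_lines l.

Definition heawood_adj : rel 'I_14 := fun i j =>
  ((i < 7) && (7 <= j) && fano_incid i (j - 7))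
  || ((j < 7) && (7 <= i) && fano_incid j (i - 7)).

Section MR.
Variable R : realType.
Local Open Scope ring_scope.

Definition in_SG (n : nat) (e : rel 'I_n) (A : 'M[R]_n) : Prop :=
  A^T = A /\ (forall i j : 'I_n, i != j -> (A i j != 0) = e i j).

Definition nullity (n : nat) (A : 'M[R]_n) : nat := (n - \rank A)%N.

Definition is_max_nullity (n : nat) (e : rel 'I_n) (k : nat) : Prop :=
  (exists A : 'M[R]_n, in_SG e A /\ nullity A = k) /\
  (forall A : 'M[R]_n, in_SG e A -> (nullity A <= k)%N).
End MR.

Section ZF.
Variable T : finType.
Variable e : rel T.

Definition force_step (B : {set T}) : {set T} :=
  B :|: [set w | [exists v, [&& v \in B, e v w, w \notin B &
                    [forall u, (e v u && (u \notin B)) ==> (u == w)]]]].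

Definition zf_closure (Z : {set T}) : {set T} := iter #|T| force_step Z.

Definition zero_forcing_set (Z : {set T}) : bool := zf_closure Z == setT.

Definition zero_forcing_number : nat :=
  \big[minn/#|T|]_(Z : {set T} | zero_forcing_set Z) #|Z|.
End ZF.

From mathcomp Require Import all_boot all_order all_algebra.
From mathcomp Require Import reals.
Set Implicit Arguments. Unset Strict Implicit. Unset Printing Implicit Defensive.
Import GRing.Theory.

(* Every zero forcing set Z bounds the nullity of every A in S(G): if a
   kernel vector vanishes on the black vertices and v forces w, then row v
   of A x = 0 has a single surviving term, at w, so the vector vanishes at w
   too; hence the kernel meets the coordinates outside Z trivially and
   M(G) <= Z(G).  For the Heawood graph the points 1, 2, 3 and the lines
   {1,2,4}, {2,3,5}, {3,4,6} form a zero forcing set, so Z(G) <= 6.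
   Conversely, with N the point-line incidence matrix of the Fano plane,
   A = [[I, N], [N^T, 2I]] lies in S(G).  Two distinct lines meet in exactly
   one point, so N^T N = 2I + J and the Schur complement 2I - N^T N = -J has
   rank one: A has rank 8 and nullity 6, whence 6 <= M(G) <= Z(G) <= 6. *)

Lemma zero_forcing_number_le (T : finType) (e : rel T) (Z : {set T}) :
  zero_forcing_set e Z -> (zero_forcing_number e <= #|Z|)%N.
Proof.
move=> zfZ; rewrite /zero_forcing_number.
elim: (index_enum _) (mem_index_enum Z) => //= X r IH.
rewrite inE big_cons => /predU1P[<- | /IH le_r]; first by rewrite zfZ geq_minl.
by case: ifP => // _; exact: leq_trans (geq_minr _ _) le_r.
Qed.

Section ZeroForcingKernel.
Variables (R : realType) (n : nat) (e : rel 'I_n) (A : 'M[R]_n).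
Hypothesis A_SG : in_SG e A.
Local Open Scope ring_scope.

Lemma force_step_kernel (u : 'rV[R]_n) (B : {set 'I_n}) :
  u *m A = 0 -> {in B, forall j, u 0 j = 0} ->
  {in force_step e B, forall j, u 0 j = 0}.
Proof.
case: A_SG => A_sym A_e uA uB j.
have Asym i k : A i k = A k i by rewrite -[in LHS]A_sym mxE.
rewrite inE => /orP[/uB // |]; rewrite inE.
case/existsP=> v /and4P[vB evj jB /forallP only_j].
have v_neq_j : v != j by apply: contraNneq jB => <-.
have /matrixP/(_ 0 v) := uA; rewrite !mxE (bigD1 j) //= big1 => [|i i_neq_j].
  rewrite addr0 => /eqP; rewrite mulf_eq0 Asym -[A v j == 0]negbK A_e //.
  by rewrite evj orbF => /eqP.
have [iB | iNB] := boolP (i \in B); first by rewrite uB ?mul0r.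
have v_neq_i : v != i by apply: contraNneq iNB => <-.
suff -> : A i v = 0 by rewrite mulr0.
apply/eqP; rewrite Asym -[A v i == 0]negbK A_e //; apply: contra i_neq_j => evi.
by have := only_j i; rewrite evi iNB.
Qed.

Lemma zf_closure_kernel (u : 'rV[R]_n) (Z : {set 'I_n}) :
  u *m A = 0 -> {in Z, forall j, u 0 j = 0} ->
  {in zf_closure e Z, forall j, u 0 j = 0}.
Proof.
move=> uA uZ; rewrite /zf_closure; elim: #|_| => [|k IH] //=.
exact: force_step_kernel.
Qed.

Lemma zero_forcing_kernel_eq0 (u : 'rV[R]_n) (Z : {set 'I_n}) :
  zero_forcing_set e Z -> u *m A = 0 -> {in Z, forall j, u 0 j = 0} -> u = 0.
Proof.
move=> /eqP closZ uA uZ; apply/rowP => j; rewrite mxE.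
by apply: (zf_closure_kernel uA uZ); rewrite closZ inE.
Qed.

Lemma nullity_le_zero_forcing_set (Z : {set 'I_n}) :
  zero_forcing_set e Z -> (nullity A <= #|Z|)%N.
Proof.
move=> zfZ; pose P : 'M[R]_(n, #|Z|) := \matrix_(i, k) (i == enum_val k)%:R.
have restrictP (u : 'rV_n) k : (u *m P) 0 k = u 0 (enum_val k).
  rewrite mxE (bigD1 (enum_val k)) //= big1 => [|i /negbTE ik].
    by rewrite mxE eqxx mulr1 addr0.
  by rewrite mxE ik mulr0.
rewrite /nullity -mxrank_ker -(mxrank_mul_ker (kermx A) P).
rewrite (_ : \rank (kermx A :&: kermx P)%MS = 0)%N ?addn0 ?rank_leq_col //.
apply/eqP; rewrite mxrank_eq0; apply/rowV0P => u.
rewrite sub_capmx => /andP[/sub_kermxP uA /sub_kermxP uP].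
apply: zero_forcing_kernel_eq0 zfZ uA _ => j jZ.
by rewrite -(enum_rankK_in jZ jZ) -restrictP uP mxE.
Qed.

Lemma nullity_le_zero_forcing_number : (nullity A <= zero_forcing_number e)%N.
Proof.
rewrite /zero_forcing_number; elim/big_ind: _ => [|x y le_x le_y|Z].
- by rewrite card_ord leq_subr.
- by rewrite leq_min le_x le_y.
- exact: nullity_le_zero_forcing_set.
Qed.

End ZeroForcingKernel.

Lemma max_nullity_eq_zero_forcing (R : realType) n (e : rel 'I_n) (k : nat)
    (A : 'M[R]_n) (Z : {set 'I_n}) :
  in_SG e A -> zero_forcing_set e Z -> (k <= nullity A)%N -> (#|Z| <= k)%N ->
  is_max_nullity R e k /\ zero_forcing_number e = k.
Proof.
move=> A_SG zfZ k_le_A Z_le_k.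
have zfn_le_k := leq_trans (zero_forcing_number_le zfZ) Z_le_k.
have null_le_k B : in_SG e B -> (nullity B <= k)%N.
  by move=> B_SG; exact: leq_trans (nullity_le_zero_forcing_number B_SG) _.
split; first split.
- by exists A; split => //; apply/eqP; rewrite eqn_leq null_le_k.
- exact: null_le_k.
- apply/eqP; rewrite eqn_leq zfn_le_k.
  exact: leq_trans k_le_A (nullity_le_zero_forcing_number A_SG).
Qed.

Section ZeroForcingOnNat.
Variables (n : nat) (e : rel 'I_n.+1).

Definition ord_set (s : seq nat) : {set 'I_n.+1} := [set i | val i \in s].

Lemma card_ord_set_le (s : seq nat) : (#|ord_set s| <= size s)%N.
Proof.
rewrite cardE -(size_map val); apply: uniq_leq_size.
  by rewrite (map_inj_uniq val_inj) enum_uniq.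
by move=> x /mapP[i]; rewrite mem_enum inE => i_s ->.
Qed.

(* [inZp] rather than [inord]: with [inord] the [vm_compute] below is
   impractically slow. *)
Definition force_step_seq (s : seq nat) : seq nat :=
  let adj i j := e (inZp i) (inZp j) in
  s ++ [seq w <- iota 0 n.+1 | has (fun v => [&& v \in s, adj v w, w \notin s &
        all (fun u => adj v u && (u \notin s) ==> (u == w)) (iota 0 n.+1)])
        (iota 0 n.+1)].

Lemma force_step_ord_set (s : seq nat) :
  force_step e (ord_set s) = ord_set (force_step_seq s).
Proof.
apply/setP => w; rewrite !inE mem_cat mem_filter -val_enum_ord.
rewrite (mem_map val_inj) mem_enum andbT has_map; congr orb.
apply/existsP/hasP => [[v] | [v _]].
  rewrite inE => /and4P[vs evw ws /forallP only_w].
  exists v; first exact: mem_enum.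
  rewrite /= all_map !valZpK; apply/and4P; split=> //; apply/allP => u _ /=.
  by have := only_w u; rewrite valZpK inE.
rewrite /= all_map !valZpK => /and4P[vs evw ws /allP only_w].
exists v; rewrite inE; apply/and4P; split=> //; apply/forallP => u.
by have := only_w u (mem_enum _ u); rewrite /= valZpK inE.
Qed.

Lemma iter_force_step_ord_set (k : nat) (s : seq nat) :
  iter k (force_step e) (ord_set s) = ord_set (iter k force_step_seq s).
Proof. by elim: k => //= k ->; rewrite force_step_ord_set. Qed.

Lemma zero_forcing_ord_set (s : seq nat) :
  all (mem (iter n.+1 force_step_seq s)) (iota 0 n.+1) ->
  zero_forcing_set e (ord_set s).
Proof.
move=> /allP forced; apply/eqP/setP => i.
rewrite /zf_closure card_ord iter_force_step_ord_set !inE.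
by apply: forced; rewrite mem_iota ltn_ord.
Qed.

End ZeroForcingOnNat.

Lemma heawood_adj_sym (i j : 'I_14) : heawood_adj i j = heawood_adj j i.
Proof. by rewrite /heawood_adj orbC. Qed.

Lemma heawood_adj_points (p q : 'I_7) :
  heawood_adj (lshift 7 p) (lshift 7 q) = false.
Proof. by rewrite /heawood_adj /= !(leqNgt 7) !ltn_ord. Qed.

Lemma heawood_adj_lines (l l' : 'I_7) :
  heawood_adj (rshift 7 l) (rshift 7 l') = false.
Proof. by rewrite /heawood_adj. Qed.

Lemma heawood_adj_point_line (p l : 'I_7) :
  heawood_adj (lshift 7 p) (rshift 7 l) = fano_incid p l.
Proof. by rewrite /heawood_adj /= ltn_ord leq_addr addKn orbF. Qed.

Definition heawood_zf_set : {set 'I_14} := ord_set 13 [:: 0; 1; 2; 7; 8; 9].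

Lemma heawood_zero_forcing : zero_forcing_set heawood_adj heawood_zf_set.
Proof. by apply: zero_forcing_ord_set; vm_compute. Qed.

Lemma card_heawood_zf_set : (#|heawood_zf_set| <= 6)%N.
Proof. exact: card_ord_set_le. Qed.

Lemma fano_lines_meet (l l' : 'I_7) :
  (\sum_(p < 7) (fano_incid p l && fano_incid p l'))%N = (l == l').*2.+1.
Proof.
have /allrelP meet : allrel (fun l l' =>
    \sum_(0 <= p < 7) (fano_incid p l && fano_incid p l') == (l == l').*2.+1)%N
    (iota 0 7) (iota 0 7).
  by rewrite unlock; vm_compute.
have in_iota (k : 'I_7) : val k \in iota 0 7 by rewrite mem_iota ltn_ord.
by have /eqP := meet l l' (in_iota l) (in_iota l'); rewrite big_mkord.
Qed.

Section HeawoodWitness.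
Variable R : realType.
Local Open Scope ring_scope.

Definition fano_incidence : 'M[R]_7 := \matrix_(p, l) (fano_incid p l)%:R.
Local Notation N := fano_incidence.

Lemma fano_gram : N^T *m N = 2%:M + const_mx 1.
Proof.
apply/matrixP => l l'; rewrite !mxE.
under eq_bigr do rewrite !mxE -natrM mulnb.
rewrite -natr_sum fano_lines_meet.
by case: (l == l'); rewrite /= ?add0r // -addn1 natrD.
Qed.

Definition heawood_witness : 'M[R]_(7 + 7) := block_mx 1%:M N N^T 2%:M.

Lemma heawood_witness_factor :
  heawood_witness = block_mx 1%:M (0 : 'M_(7, 1)) N^T (const_mx 1)
                    *m block_mx 1%:M N (0 : 'M_(1, 7)) (const_mx (-1)).
Proof.
rewrite mulmx_block !mul1mx !mulmx1 !mulmx0 !mul0mx !addr0 fano_gram.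
suff -> : 2%:M + const_mx 1 + (const_mx 1 : 'M_(7, 1)) *m const_mx (-1)
          = 2%:M :> 'M[R]_7 by [].
by apply/matrixP => i j; rewrite !mxE big_ord1 !mxE mul1r addrK.
Qed.

Lemma heawood_witness_nullity : (6 <= nullity heawood_witness)%N.
Proof.
rewrite /nullity heawood_witness_factor.
apply: (@leq_sub2l 14 _ 8).
exact: leq_trans (mxrankM_maxl _ _) (rank_leq_col _).
Qed.

Lemma heawood_witness_SG : in_SG heawood_adj heawood_witness.
Proof.
split.
  have := tr_block_mx (1%:M : 'M[R]_7) N N^T 2%:M.
  by rewrite trmx1 trmxK tr_scalar_mx.
suff offdiag (i j : 'I_(7 + 7)) :
    i != j -> (heawood_witness i j != 0) = heawood_adj i j by exact: offdiag.
rewrite -[i]splitK -[j]splitK.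
case: (split i) => p; case: (split j) => q /=; rewrite /heawood_witness.
- rewrite block_mxEul heawood_adj_points mxE (inj_eq (@lshift_inj 7 7)).
  by move=> /negbTE->; rewrite eqxx.
- rewrite block_mxEur heawood_adj_point_line mxE => _.
  by case: fano_incid; rewrite ?oner_neq0 ?eqxx.
- rewrite block_mxEdl heawood_adj_sym heawood_adj_point_line !mxE => _.
  by case: fano_incid; rewrite ?oner_neq0 ?eqxx.
- rewrite block_mxEdr heawood_adj_lines mxE (inj_eq (@rshift_inj 7 7)).
  by move=> /negbTE->; rewrite eqxx.
Qed.
End HeawoodWitness.

Theorem mainTheorem8 (R : realType) :
  is_max_nullity R heawood_adj 6 /\ zero_forcing_number heawood_adj = 6%N.
Proof.
exact: max_nullity_eq_zero_forcing (heawood_witness_SG R) heawood_zero_forcing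
  (heawood_witness_nullity R) card_heawood_zf_set.
Qed.
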